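(* There exists a family of broadcast protocols $(P_n)_{n}$, $P_n=(Q_n,I_n,M_n,\Delta_n)$, with target sets $F_n\subseteq Q_n$ and $|Q_n|\in O(n)$, such that for every $n$ there exist both a reconfigurable execution and a lossy execution of $P_n$ covering $F_n$, and every reconfigurable or lossy execution of $P_n$ covering $F_n$ has $\Omega(n)$ nodes and length $\Omega(n^2)$.
   Context: A broadcast protocol is a tuple $P=(Q,I,M,\Delta)$ where $Q$ is a finite set of states, $I\subseteq Q$ initial states, $M$ a finite message alphabet and $\Delta\subseteq Q\times\{!!m,\ ??m \mid m\in M\}\times Q$ ($!!m$ = broadcast, $??m$ = reception); protocols are complete for receptions (for every $q$, $m$ there is $q'$ with $(q,??m,q')\in\Delta$). A configuration is a finite undirected graph $\gamma=(V,E,L)$, $E$ symmetric irreflexive, $L:V\to Q$; initial if $L(V)\subseteq I$. A reconfigurable step from $(V,E,L)$ to $(V,E',L')$ ($E'$ arbitrary): some node $v$ and $m$ with $(L(v),!!m,L'(v))\in\Delta$, every neighbour $v'$ of $v$ in $E$ satisfies $(L(v'),??m,L'(v'))\in\Delta$, every other node keeps its label. A lossy step from $(V,E,L)$ to $(V,E,L')$ (edges fixed): some $v$, $m$ with $(L(v),!!m,L'(v))\in\Delta$ and either all other nodes keep their labels (lost broadcast) or as in the reconfigurable step with $E$ (successful broadcast). A reconfigurable (resp. lossy) execution is a sequence $\gamma_0,\dots,\gamma_r$ with $\gamma_0$ initial and consecutive reconfigurable (resp. lossy) steps; its number of nodes is $|V|$, its length is $r$, and it covers $F$ if some node of $\gamma_r$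 has a label in $F$. *)

From mathcomp Require Import all_boot.
Set Implicit Arguments. Unset Strict Implicit. Unset Printing Implicit Defensive.

(* The transition relation
   Delta ⊆ Q × {!!m, ??m | m ∈ M} × Q is split into its broadcast part
   [pbcast q m q'] (= (q, !!m, q') ∈ Delta) and its reception part
   [precv q m q'] (= (q, ??m, q') ∈ Delta). *)
Record protocol : Type := Protocol {
  pstate : finType;
  pmsg : finType;
  pinit : pred pstate;
  pbcast : pstate -> pmsg -> pstate -> bool;
  precv : pstate -> pmsg -> pstate -> bool;
  precv_complete : forall q m, exists q', precv q m q'
}.
Arguments pinit : clear implicits.
Arguments pbcast : clear implicits.
Arguments precv : clear implicits.

Record config (P : protocol) (V : finType) : Type := Config {
  cedge : rel V;
  clab : V -> pstate P
}.

Definition is_config (P : protocol) (V : finType) (g : config P V) : Prop :=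
  symmetric (cedge g) /\ irreflexive (cedge g).

Definition is_initial (P : protocol) (V : finType) (g : config P V) : Prop :=
  forall v, pinit P (clab g v).

Definition bcast_by (P : protocol) (V : finType) (g g' : config P V)
  (v : V) (m : pmsg P) : Prop :=
  pbcast P (clab g v) m (clab g' v) /\
  forall u, u != v ->
    (cedge g v u -> precv P (clab g u) m (clab g' u)) /\
    (~~ cedge g v u -> clab g' u = clab g u).

(* Reconfigurable step: E' arbitrary. *)
Definition reconf_step (P : protocol) (V : finType) (g g' : config P V) : Prop :=
  exists v m, bcast_by g g' v m.

(* Lossy step: edges fixed; broadcast lost or successful. *)
Definition lossy_step (P : protocol) (V : finType) (g g' : config P V) : Prop :=
  (forall x y, cedge g' x y = cedge g x y) /\
  exists v m,
    (pbcast P (clab g v) m (clab g' v) /\ forall u, u != v -> clab g' u = clab g u)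
    \/ bcast_by g g' v m.

Fixpoint chain (A : Type) (R : A -> A -> Prop) (x : A) (s : seq A) : Prop :=
  match s with
  | [::] => True
  | y :: s' => R x y /\ chain R y s'
  end.

(* An execution gamma_0, ..., gamma_r is represented by gamma_0 = g0 and
   gs = [:: gamma_1; ...; gamma_r]; its length is r = size gs and its
   number of nodes is #|V|. *)
Definition execution (P : protocol) (V : finType)
  (step : config P V -> config P V -> Prop) (g0 : config P V)
  (gs : seq (config P V)) : Prop :=
  is_initial g0 /\ is_config g0 /\ (forall i, i < size gs -> is_config (nth g0 gs i)) /\
  chain step g0 gs.

Definition reconf_execution (P : protocol) (V : finType) (g0 : config P V)
  (gs : seq (config P V)) : Prop := execution (@reconf_step P V) g0 gs.

Definition lossy_execution (P : protocol) (V : finType) (g0 : config P V)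
  (gs : seq (config P V)) : Prop := execution (@lossy_step P V) g0 gs.

Definition covers (P : protocol) (V : finType) (F : pred (pstate P))
  (g0 : config P V) (gs : seq (config P V)) : Prop :=
  exists v, F (clab (last g0 gs) v).

From mathcomp Require Import all_boot zify.
Set Implicit Arguments. Unset Strict Implicit. Unset Printing Implicit Defensive.

(* In the counting protocol, workers climb from level 0 to level n+1, one level
   per broadcast, and only the last climb sends the message [true]; a collector
   counts the [true] messages it receives, and the target is the collector at
   count n.  Receptions never change levels, so the length of an execution is
   the total level of its final configuration, and the collector's count never
   exceeds the number of finished workers.  Covering the target thus needs n
   finished workers: at least n nodes and n(n+1) broadcasts.  Conversely, on the
   complete graph of n workers and a collector, letting the workers finish one
   after the other covers the target. *)

Section Chains.
Variables (A : Type) (R : A -> A -> Prop).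

Lemma cat_chain x s1 s2 :
  chain R x (s1 ++ s2) <-> chain R x s1 /\ chain R (last x s1) s2.
Proof. by elim: s1 x => [|y s1 IH] x /=; [tauto | rewrite IH; tauto]. Qed.

Lemma chain_last_inv (I : A -> Prop) :
  (forall x y, I x -> R x y -> I y) ->
  forall x s, I x -> chain R x s -> I (last x s).
Proof. by move=> RI x s; elim: s x => [|y s IH] x //= Ix [/(RI _ _ Ix) Iy /(IH _ Iy)]. Qed.

Lemma chain_last_measure (phi : A -> nat) :
  (forall x y, R x y -> phi y = (phi x).+1) ->
  forall x s, chain R x s -> phi (last x s) = phi x + size s.
Proof.
move=> Rphi x s; elim: s x => [|y s IH] x /=; first by rewrite addn0.
by case=> /Rphi xy /IH->; rewrite xy addSn addnS.
Qed.

Definition reachable x y := exists2 s, chain R x s & last x s = y.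

Lemma reachable_refl x : reachable x x.
Proof. by exists [::]. Qed.

Lemma reachable1 x y : R x y -> reachable x y.
Proof. by exists [:: y]. Qed.

Lemma reachable_trans x y z : reachable x y -> reachable y z -> reachable x z.
Proof.
case=> s1 xs1 <- [s2 ys2 <-]; exists (s1 ++ s2); last by rewrite last_cat.
exact/cat_chain.
Qed.
End Chains.

Lemma chain_map (A B : Type) (R : A -> A -> Prop) (S : B -> B -> Prop) (f : A -> B) :
  (forall x y, R x y -> S (f x) (f y)) ->
  forall x s, chain R x s -> chain S (f x) (map f s).
Proof. by move=> RS x s; elim: s x => [|y s IH] x //= [/RS ? /IH]. Qed.

Lemma sum_update (V : finType) (F F' : V -> nat) v :
  (forall u, u != v -> F' u = F u) -> \sum_u F' u + F v = \sum_u F u + F' v.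
Proof.
move=> FF'; rewrite (bigD1 v) //= [in RHS](bigD1 v) //= (eq_bigr _ FF').
by rewrite addnAC [RHS]addnC addnA.
Qed.

Section BroadcastToAll.
Variables (P : protocol) (V : finType).

Definition bcast_all (L L' : V -> pstate P) : Prop :=
  exists v m, pbcast P (L v) m (L' v) /\
    forall u, u != v -> precv P (L u) m (L' u).

Definition complete_config (L : V -> pstate P) : config P V :=
  @Config P V (fun x y => x != y) L.

Lemma complete_config_is_config L : is_config (complete_config L).
Proof. by split=> [x y | x] /=; rewrite ?eqxx // eq_sym. Qed.

Lemma bcast_all_bcast_by L L' :
  bcast_all L L' -> exists v m, bcast_by (complete_config L) (complete_config L') v m.
Proof.
case=> v [m [Lv Lu]]; exists v, m; split=> // u uv.
by split=> /= [_ | ]; [exact: Lu | rewrite eq_sym uv].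
Qed.

Lemma bcast_all_reconf_step L L' :
  bcast_all L L' -> reconf_step (complete_config L) (complete_config L').
Proof. exact: bcast_all_bcast_by. Qed.

Lemma bcast_all_lossy_step L L' :
  bcast_all L L' -> lossy_step (complete_config L) (complete_config L').
Proof. by case/bcast_all_bcast_by=> v [m vm]; split=> //; exists v, m; right. Qed.

Lemma complete_execution (step : config P V -> config P V -> Prop) L0 s :
  (forall L L', bcast_all L L' -> step (complete_config L) (complete_config L')) ->
  (forall v, pinit P (L0 v)) -> chain bcast_all L0 s ->
  execution step (complete_config L0) (map complete_config s).
Proof.
move=> stepP L0init L0s; split=> //; split; first exact: complete_config_is_config.
split; last exact: chain_map L0s.
move=> i; rewrite size_map => lt_i_s.
by rewrite (nth_map L0) //; apply: complete_config_is_config.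
Qed.

Lemma execution_chain_bcast_all (step : config P V -> config P V -> Prop) g0 gs :
  (forall g g', step g g' -> bcast_all (clab g) (clab g')) ->
  execution step g0 gs -> chain bcast_all (clab g0) (map (@clab P V) gs).
Proof. by move=> stepP [_ [_ [_ g0gs]]]; apply: chain_map g0gs. Qed.

Hypothesis precv_refl : forall q m, precv P q m q.

Lemma reconf_step_bcast_all g g' : reconf_step g g' -> bcast_all (clab g) (clab g').
Proof.
case=> v [m [gv gu]]; exists v, m; split=> // u /gu[recv keep].
by case: (boolP (cedge g v u)) => [/recv // | /keep ->]; apply: precv_refl.
Qed.

Lemma lossy_step_bcast_all g g' : lossy_step g g' -> bcast_all (clab g) (clab g').
Proof.
case=> _ [v [m [[gv gu] | vm]]]; last by apply: reconf_step_bcast_all; exists v, m.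
by exists v, m; split=> // u /gu ->; apply: precv_refl.
Qed.
End BroadcastToAll.
Arguments complete_config {P V} L.

Section CountingProtocol.
Variable n : nat.

(* [inl i]: a worker at level [i]; [inr k]: the collector at count [k]. *)
Definition cstate : finType := ('I_n.+2 + 'I_n.+1)%type.

Definition cinit (q : cstate) : bool :=
  match q with inl i => i == 0 :> nat | inr k => k == 0 :> nat end.

Definition cbcast (q : cstate) (m : bool) (q' : cstate) : bool :=
  match q, q' with
  | inl i, inl j => (j == i.+1 :> nat) && (m == (i == n :> nat))
  | _, _ => false
  end.

Definition crecv (q : cstate) (m : bool) (q' : cstate) : bool :=
  (q' == q) || m && match q, q' with
                    | inr k, inr k' => k' == k.+1 :> nat
                    | _, _ => false
                    end.

Lemma crecv_refl q m : crecv q m q.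
Proof. by rewrite /crecv eqxx. Qed.

Definition counting_protocol : protocol :=
  @Protocol cstate bool cinit cbcast crecv (fun q m => ex_intro _ q (crecv_refl q m)).

Definition ctarget : pred (pstate counting_protocol) :=
  fun q => if q is inr k then k == n :> nat else false.

Definition worker_level (q : cstate) : nat := if q is inl i then i else 0.
Definition worker_done (q : cstate) : nat := if q is inl i then i == n.+1 :> nat else 0.
Definition collector_count (q : cstate) : nat := if q is inr k then k else 0.

Lemma cbcast_spec q m q' : cbcast q m q' ->
  [/\ worker_level q' = (worker_level q).+1, worker_done q = 0,
      worker_done q' = m & collector_count q' = 0].
Proof.
case: q q' => [i|k] [j|k'] //= /andP[/eqP j_eq /eqP ->].
have /ltn_eqF-> : i < n.+1 by rewrite -ltnS -j_eq.
by rewrite j_eq eqSS; case: (i == n :> nat).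
Qed.

Lemma crecv_spec q m q' : crecv q m q' ->
  [/\ worker_level q' = worker_level q, worker_done q' = worker_done q
    & collector_count q' <= collector_count q + m].
Proof.
case/orP=> [/eqP -> | /andP[-> ]]; first by rewrite leq_addr.
by case: q q' => [i|k] [j|k'] //= /eqP ->; rewrite addn1.
Qed.

Lemma cinit_spec q : cinit q -> worker_level q = 0 /\ collector_count q = 0.
Proof. by case: q => [i|k] /= /eqP ->. Qed.

Lemma worker_done_le1 q : worker_done q <= 1.
Proof. by case: q => [i|k] //=; case: (i == n.+1 :> nat). Qed.

Lemma worker_done_level q : n.+1 * worker_done q <= worker_level q.
Proof.
case: q => [i|k] /=; last by rewrite muln0.
by case: (i =P n.+1 :> nat) => [-> | _]; rewrite ?muln1 ?muln0.
Qed.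
End CountingProtocol.

Section LowerBound.
Variables (n : nat) (V : finType).
Local Notation cstep := (@bcast_all (counting_protocol n) V).
Local Notation cconfig := (config (counting_protocol n) V).

Definition level_sum (L : V -> cstate n) : nat := \sum_u worker_level (L u).
Definition done_count (L : V -> cstate n) : nat := \sum_u worker_done (L u).
Definition collector_bounded (L : V -> cstate n) : Prop :=
  forall u, collector_count (L u) <= done_count L.

Lemma cstep_level_sum L L' : cstep L L' -> level_sum L' = (level_sum L).+1.
Proof.
case=> v [m [/cbcast_spec[Lv _ _ _] /= Lu]].
apply/eqP; rewrite -(eqn_add2r (worker_level (L v))) /level_sum.
rewrite (sum_update (F := fun u => worker_level (L u))) => [|u /Lu /crecv_spec[] //].
by rewrite Lv addnS.
Qed.

Lemma cstep_collector_bounded L L' :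
  collector_bounded L -> cstep L L' -> collector_bounded L'.
Proof.
move=> Lbounded [v [m [/cbcast_spec[_ Lv L'v L'vc] /= Lu]]].
have done_L' : done_count L' = done_count L + m.
  apply/eqP; rewrite -(eqn_add2r (worker_done (L v))) /done_count.
  rewrite (sum_update (F := fun u => worker_done (L u))) => [|u /Lu /crecv_spec[] //].
  by rewrite L'v Lv addn0.
move=> u; rewrite done_L'.
have [-> | /Lu /crecv_spec[_ _ L'u]] := eqVneq u v; first by rewrite L'vc.
by rewrite (leq_trans L'u) ?leq_add2r ?Lbounded.
Qed.

Lemma covering_chain_bounds L0 s w :
  (forall u, cinit (L0 u)) -> chain cstep L0 s -> ctarget (last L0 s w) ->
  n <= #|V| /\ n ^ 2 <= size s.
Proof.
move=> L0init L0s target_w; set L := last L0 s in target_w.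
have level_L : level_sum L = size s.
  rewrite (chain_last_measure cstep_level_sum L0s) /level_sum big1 // => u _.
  by case: (cinit_spec (L0init u)).
have bounded_L : collector_bounded L.
  apply: (chain_last_inv cstep_collector_bounded _ L0s) => u.
  by case: (cinit_spec (L0init u)) => _ ->.
have n_done : n <= done_count L.
  by move: (bounded_L w) target_w; case: (L w) => [//|k] /= ? /eqP <-.
have done_V : done_count L <= #|V|.
  by rewrite -sum1_card; apply: leq_sum => u _; apply: worker_done_le1.
have done_level : n.+1 * done_count L <= level_sum L.
  by rewrite big_distrr; apply: leq_sum => u _; apply: worker_done_level.
split; first exact: leq_trans done_V.
rewrite -level_L; apply: leq_trans done_level; rewrite expnS expn1 mulnC.
by apply: leq_mul.
Qed.

Lemma covering_execution_bounds (step : cconfig -> cconfig -> Prop) g0 gs :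
  (forall g g', step g g' -> cstep (clab g) (clab g')) ->
  execution step g0 gs -> covers (@ctarget n) g0 gs ->
  n <= #|V| /\ n ^ 2 <= size gs.
Proof.
move=> stepP exec_gs [w target_w]; rewrite -(size_map (@clab _ V)).
apply: (covering_chain_bounds (w := w) _ (execution_chain_bcast_all stepP exec_gs)).
  by case: exec_gs.
by rewrite last_map.
Qed.
End LowerBound.

Section UpperBound.
Variable n : nat.
Local Notation V := (option 'I_n).
Local Notation cstep := (@bcast_all (counting_protocol n) V).
Local Notation cconfig := (config (counting_protocol n) V).

Definition stage (j l : nat) (u : V) : pstate (counting_protocol n) :=
  match u with
  | None => inr (inord j)
  | Some i => inl (if i < j then inord n.+1 else if i == j :> nat then inord l else inord 0)
  end.

Lemma stage_other_worker j (lt_j_n : j < n) i :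
  Some i != Some (Ordinal lt_j_n) :> V -> (i == j :> nat) = false.
Proof. by apply: contraNF => /eqP ij; apply/eqP; congr Some; apply: val_inj. Qed.

Lemma stage_cstep_level j l : j < n -> l < n -> cstep (stage j l) (stage j l.+1).
Proof.
move=> lt_j_n lt_l_n; exists (Some (Ordinal lt_j_n)), false; split.
  by rewrite /= ltnn eqxx !inordK ?eqxx ?(ltn_eqF lt_l_n) //; lia.
by case=> [i /stage_other_worker ij | _]; rewrite /= /crecv ?ij eqxx.
Qed.

Lemma stage_cstep_done j : j < n -> cstep (stage j n) (stage j.+1 0).
Proof.
move=> lt_j_n; exists (Some (Ordinal lt_j_n)), true; split.
  by rewrite /= ltnn eqxx ltnSn !inordK ?eqxx //; lia.
case=> [i /stage_other_worker ij | _]; rewrite /= /crecv.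
  by rewrite ltnS leq_eqVlt ij /= if_same eqxx.
by rewrite !inordK ?eqxx ?orbT //; lia.
Qed.

Lemma reachable_stage_level j l : j < n -> l <= n -> reachable cstep (stage j 0) (stage j l).
Proof.
move=> lt_j_n; elim: l => [_ | l IH lt_l_n]; first exact: reachable_refl.
exact: reachable_trans (IH (ltnW lt_l_n)) (reachable1 (stage_cstep_level lt_j_n lt_l_n)).
Qed.

Lemma reachable_stage j : j <= n -> reachable cstep (stage 0 0) (stage j 0).
Proof.
elim: j => [_ | j IH lt_j_n]; first exact: reachable_refl.
apply: reachable_trans (IH (ltnW lt_j_n)) _.
apply: reachable_trans (reachable_stage_level lt_j_n (leqnn n)) _.
exact/reachable1/stage_cstep_done.
Qed.

Lemma covering_execution_exists (step : cconfig -> cconfig -> Prop) :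
  (forall L L', cstep L L' -> step (complete_config L) (complete_config L')) ->
  exists g0 gs, execution step g0 gs /\ covers (@ctarget n) g0 gs.
Proof.
move=> stepP; have [s stage_s last_s] := reachable_stage (leqnn n).
exists (complete_config (stage 0 0)), (map complete_config s); split.
  by apply: complete_execution stage_s => // -[i|] /=; rewrite ?if_same inordK.
by exists None; rewrite last_map last_s /= inordK.
Qed.
End UpperBound.

Theorem theorem3p8 :
  exists (P : nat -> protocol) (F : forall n, pred (pstate (P n))),
    (* |Q_n| ∈ O(n) *)
    (exists c N, forall n, N <= n -> #|pstate (P n)| <= c * n) /\
    (* for every n, a covering reconfigurable and a covering lossy execution exist *)
    (forall n,
       (exists (V : finType) (g0 : config (P n) V) (gs : seq (config (P n) V)),
          reconf_execution g0 gs /\ covers (F n) g0 gs) /\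
       (exists (V : finType) (g0 : config (P n) V) (gs : seq (config (P n) V)),
          lossy_execution g0 gs /\ covers (F n) g0 gs)) /\
    (* every covering execution has Ω(n) nodes and length Ω(n^2) *)
    (exists c N, 0 < c /\ forall n, N <= n ->
       forall (V : finType) (g0 : config (P n) V) (gs : seq (config (P n) V)),
         (reconf_execution g0 gs \/ lossy_execution g0 gs) ->
         covers (F n) g0 gs ->
         n <= c * #|V| /\ n ^ 2 <= c * size gs).
Proof.
exists counting_protocol, ctarget; split.
  by exists 5, 1 => n n_pos; rewrite /= card_sum !card_ord; lia.
split.
  move=> n; split; exists (option 'I_n : finType); apply: covering_execution_exists.
    exact: bcast_all_reconf_step.
  exact: bcast_all_lossy_step.
exists 1, 0; split=> // n _ V g0 gs exec_gs covering; rewrite !mul1n.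
case: exec_gs => exec_gs; apply: (covering_execution_bounds _ exec_gs covering).
  exact: (@reconf_step_bcast_all (counting_protocol n)) (@crecv_refl n).
exact: (@lossy_step_bcast_all (counting_protocol n)) (@crecv_refl n).
Qed.
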